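(* Let $(\vec U,\le,{}^*,\vee,\wedge)$ be a universe of separations containing a separation system $\vec S$ (with induced order and involution), and let $\mathcal F\subseteq 2^{\vec S}$ be a set of stars. Let $(T,\alpha)$ be an irredundant $S$-tree over $\mathcal F$, let $x$ be a leaf of $T$, and let $\vec e$ be the edge of $T$ at $x$ oriented away from $x$. Assume $\vec r:=\alpha(\vec e)$ is nontrivial and nondegenerate and that $\alpha(\vec e\,')\neq\vec r$ for every $\vec e\,'\in\vec E(T)$ other than $\vec e$. Let $\vec s_0\in\vec S$ be $\mathcal F$-linked to $\vec r$, and let $\alpha':=f^{\vec r}_{\vec s_0}\circ\alpha$. Then $\alpha'$ is well defined with values in $\vec S$, and $(T,\alpha')$ is an $S$-tree over $\mathcal F\cup\{\{\overleftarrow s_0\}\}$ in which $\{\overleftarrow s_0\}$ is associated with $x$ but with no other leaf of $T$.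
   Context: A separation system $(\vec S,\le,{}^* )$ is a partially ordered set with an order-reversing involution ${}^*$; write $\overleftarrow s:=\vec s^{\,*}$, a separation is $s=\{\vec s,\overleftarrow s\}$, $S$ is the set of separations, $s$ is degenerate if $\vec s=\overleftarrow s$, and $\vec r$ is trivial in $\vec S$ if there is $s\in S$ with $\vec r<\vec s$ and $\vec r<\overleftarrow s$. A star is a nonempty $\sigma\subseteq\vec S$ with $\vec r\le\overleftarrow s$ for all distinct $\vec r,\vec s\in\sigma$. A universe of separations $(\vec U,\le,{}^*,\vee,\wedge)$ is a separation system in which any two elements have a supremum $\vee$ and infimum $\wedge$. An $S$-tree is a pair $(T,\alpha)$ with $T$ a finite tree with at least one edge and $\alpha:\vec E(T)\to\vec S$ ($\vec E(T)=\{(x,y):\{x,y\}\in E(T)\}$) with $\alpha(y,x)=\alpha(x,y)^*$; $\alpha(\vec F_t)$, $\vec F_t=\{(y,t):yt\in E(T)\}$, is associated with node $t$; it is over $\mathcal F$ if $\alpha(\vec F_t)\in\mathcal F$ for all $t$; it is irredundant if no node $t$ has distinct neighbours $t',t''$ with $\alpha(t',t)=\alpha(t'',t)$. For nontrivial nondegenerate $\vec r\in\vec S$, $S_{\ge\vec r}$ is the set of $s\in S$ with an orientation $\ge\vec r$ and $\vec S_{\ge\vec r}$ the set of their orientations. For $\vec s_0\ge\vec r$ in $\vec S$, the shifting map $f^{\vec r}_{\vec s_0}:\vec S_{\ge\vec r}\to\vec U$ is given by $f(\vec s)=\vec s\vee\vec s_0$ and $f(\overleftarrow s)=(\vec s\vee\vec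 s_0)^*$ for all $\vec s\in\vec S_{\ge\vec r}\setminus\{\overleftarrow r\}$ with $\vec s\ge\vec r$. $\vec s_0\in\vec S$ is linked to $\vec r$ if $\vec s_0\ge\vec r$ and every $\vec s\in\vec S$ with $\vec s\ge\vec r$, $\vec s\ne\overleftarrow r$ satisfies $\vec s\vee\vec s_0\in\vec S$. It is $\mathcal F$-linked to $\vec r$ if it is linked to $\vec r$ and for every star $\sigma\in\mathcal F$ with $\sigma\subseteq\vec S_{\ge\vec r}\setminus\{\overleftarrow r\}$ that has an element $\ge\vec r$, the image $f^{\vec r}_{\vec s_0}(\sigma)$ lies in $\mathcal F$. *)

From HB Require Import structures.
From mathcomp Require Import all_boot all_order.
Set Implicit Arguments. Unset Strict Implicit. Unset Printing Implicit Defensive.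
Import Order.TTheory.
Local Open Scope order_scope.

Section Defs.
Variables (disp : Order.disp_t) (U : latticeType disp) (star : U -> U).

Definition is_involution := (forall u, star (star u) = u) /\
  (forall u v, u <= v -> star v <= star u).

Definition closed_star (S : U -> Prop) := forall u, S u -> S (star u).

(* families of sets, membership up to extensional equality of sets *)
Definition set_eq (X Y : U -> Prop) := forall u, X u <-> Y u.
Definition inF (F : (U -> Prop) -> Prop) (X : U -> Prop) :=
  exists Y, F Y /\ set_eq Y X.
Definition singleton (a : U) : U -> Prop := fun u => u = a.
Definition add_single (F : (U -> Prop) -> Prop) (a : U) : (U -> Prop) -> Prop :=
  fun Y => F Y \/ set_eq Y (singleton a).

Definition is_star (S : U -> Prop) (sigma : U -> Prop) :=
  (forall u, sigma u -> S u) /\ (exists u, sigma u) /\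
  (forall r s, sigma r -> sigma s -> r <> s -> r <= star s).

Definition trivial_in (S : U -> Prop) (r : U) :=
  exists s, S s /\ r < s /\ r < star s.
Definition degenerate (r : U) := r = star r.

Definition Sge (S : U -> Prop) (r u : U) := S u /\ (r <= u \/ r <= star u).

Definition shift (r s0 u : U) : U :=
  if (r <= u) && (u != star r) then u `|` s0 else star (star u `|` s0).

Definition image (f : U -> U) (sigma : U -> Prop) : U -> Prop :=
  fun v => exists u, sigma u /\ v = f u.

Definition linked (S : U -> Prop) (r s0 : U) :=
  S s0 /\ r <= s0 /\
  (forall s, S s -> r <= s -> s <> star r -> S (s `|` s0)).

Definition F_linked (S : U -> Prop) (F : (U -> Prop) -> Prop) (r s0 : U) :=
  linked S r s0 /\
  (forall sigma, F sigma -> is_star S sigma ->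
     (forall u, sigma u -> Sge S r u /\ u <> star r) ->
     (exists u, sigma u /\ r <= u) ->
     inF F (image (shift r s0) sigma)).

Definition is_tree (V : finType) (adj : rel V) :=
  symmetric adj /\ irreflexive adj /\ (forall a b, connect adj a b) /\
  (forall c : seq V, uniq c -> 2 < size c -> ~~ cycle adj c).

Definition S_tree (S : U -> Prop) (V : finType) (adj : rel V) (alpha : V -> V -> U) :=
  is_tree adj /\ (exists a b, adj a b) /\
  (forall a b, adj a b -> S (alpha a b) /\ alpha b a = star (alpha a b)).

Definition assoc (V : finType) (adj : rel V) (alpha : V -> V -> U) (t : V) : U -> Prop :=
  fun u => exists y, adj y t /\ alpha y t = u.

Definition over_fam (F : (U -> Prop) -> Prop) (V : finType) (adj : rel V) (alpha : V -> V -> U) :=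
  forall t, inF F (assoc adj alpha t).

Definition irredundant (V : finType) (adj : rel V) (alpha : V -> V -> U) :=
  forall t t1 t2, adj t1 t -> adj t2 t -> t1 <> t2 -> alpha t1 t <> alpha t2 t.

End Defs.

Definition leaf (V : finType) (adj : rel V) (l : V) :=
  exists y, adj l y /\ forall z, adj l z -> z = y.

(* In an irredundant S-tree over stars, consecutive edges into a node lie in
   a common star, so along every simple path the separations increase.  Hence
   every edge oriented away from the leaf x carries a separation >= r =
   alpha(x,y), and only the edge at x oriented towards x carries r*, because no
   other edge carries r.  So the shift by s0 is defined on the whole tree,
   commutes with the involution (r being nontrivial and nondegenerate), maps the
   star at every node other than x into F by F-linkedness, and turns the star
   {r*} at x into {s0*}.  At another leaf the incoming separation u >= r becomes
   u \/ s0, which equals s0* only if r <= s0 <= s0*: then s0 witnesses that r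
   is trivial, unless s0 = r, forcing u = r*, or s0 = r*, forcing r = r*. *)

From Pilot Require Import Defs.
From HB Require Import structures.
From mathcomp Require Import all_boot all_order.
Set Implicit Arguments. Unset Strict Implicit. Unset Printing Implicit Defensive.
Import Order.TTheory.
Local Open Scope order_scope.

Section Families.
Variables (disp : Order.disp_t) (U : latticeType disp).

Lemma inF_weaken (F G : (U -> Prop) -> Prop) (X Y : U -> Prop) :
  (forall Z, F Z -> G Z) -> set_eq X Y -> inF F X -> inF G Y.
Proof.
move=> FG XY [Z [FZ ZX]]; exists Z; split; first exact: FG.
by move=> u; split => [/ZX/XY | /XY/ZX].
Qed.

Lemma image_assoc (V : finType) (adj : rel V) (alpha : V -> V -> U)
    (f : U -> U) (Y : U -> Prop) (t : V) :
  set_eq Y (assoc adj alpha t) ->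
  set_eq (Defs.image f Y) (assoc adj (fun a b => f (alpha a b)) t).
Proof.
move=> Yt u; split => [[v [/Yt [z [zt <-]] ->]] | [z [zt <-]]].
  by exists z.
by exists (alpha z t); split => //; apply/Yt; exists z.
Qed.

End Families.

Section Shift.
Variables (disp : Order.disp_t) (U : latticeType disp) (star : U -> U).
Variables (S : U -> Prop) (r s0 : U).
Hypothesis starK : forall u, star (star u) = u.
Hypothesis r_nontrivial : ~ trivial_in star S r.
Hypothesis r_nondegenerate : ~ degenerate star r.

Definition above (u : U) := (r <= u) && (u != star r).

Lemma nontrivial_le_both (v : U) :
  S v -> r <= v -> r <= star v -> v = r \/ v = star r.
Proof.
move=> Sv rv rsv; case: (eqVneq v r) => [|vNr]; first by left.
case: (eqVneq (star v) r) => [svr|svNr]; first by right; rewrite -svr starK.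
by case: r_nontrivial; exists v; rewrite !lt_neqAle eq_sym vNr eq_sym svNr rv rsv.
Qed.

Lemma above_star (u : U) : Sge star S r u -> above (star u) = ~~ above u.
Proof.
rewrite /above => -[Su ru]; case: (eqVneq u (star r)) => [->|uNsr].
  by rewrite starK lexx andbF /=; apply/eqP.
have star_inj : injective star := can_inj starK.
rewrite (inj_eq star_inj) andbT.
have [rle|rNle] /= := boolP (r <= u).
  apply/negbTE/andP => -[rsu uNr].
  by case: (nontrivial_le_both Su rle rsu) => uE; [move/eqP: uNr | move/eqP: uNsr].
have rsu : r <= star u by case: ru => // rle; rewrite rle in rNle.
by rewrite rsu; apply: contraNneq rNle => ->.
Qed.

Lemma shiftE (u : U) :
  shift star r s0 u = if above u then u `|` s0 else star (star u `|` s0).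
Proof. by []. Qed.

Lemma shift_star (u : U) :
  Sge star S r u -> shift star r s0 (star u) = star (shift star r s0 u).
Proof. by move=> Su; rewrite !shiftE above_star //; case: (above u); rewrite starK. Qed.

Lemma shift_starr : r <= s0 -> shift star r s0 (star r) = star s0.
Proof. by move=> rs0; rewrite shiftE /above eqxx andbF starK (join_r rs0). Qed.

Lemma shift_in_S (u : U) :
  closed_star star S -> linked star S r s0 -> Sge star S r u ->
  S (shift star r s0 u).
Proof.
move=> S_star [_ [_ S_join]] Su; rewrite shiftE.
case: ifP => [/andP [ru /eqP uNsr] | Nabove]; first exact: S_join Su.1 ru uNsr.
have /andP [rsu /eqP suNsr] : above (star u) by rewrite above_star // Nabove.
by apply/S_star/S_join => //; apply: S_star Su.1.
Qed.

Lemma shift_above_neq_star (u : U) :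
  S s0 -> r <= s0 -> above u -> shift star r s0 u <> star s0.
Proof.
move=> Ss0 rs0 ab; rewrite shiftE ab => joinE; case/andP: ab => ru /eqP uNsr.
have s0_le : s0 <= star s0 by rewrite -joinE leUr.
have r_le : r <= star s0 by rewrite -joinE (le_trans ru) ?leUl.
case: (nontrivial_le_both Ss0 rs0 r_le) => s0E.
  by apply: uNsr; rewrite -s0E -joinE s0E (join_l ru).
apply: r_nondegenerate; rewrite /degenerate -s0E; apply: le_anti.
by rewrite rs0 (le_trans s0_le) // s0E starK.
Qed.

End Shift.

Section StarTree.
Variables (disp : Order.disp_t) (U : latticeType disp) (star : U -> U).
Variables (S : U -> Prop) (F : (U -> Prop) -> Prop).
Variables (V : finType) (adj : rel V) (alpha : V -> V -> U).
Hypothesis F_stars : forall sigma, F sigma -> is_star star S sigma.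
Hypothesis adj_sym : symmetric adj.
Hypothesis alpha_flip : forall a b, adj a b -> alpha b a = star (alpha a b).
Hypothesis alpha_F : over_fam F adj alpha.
Hypothesis alpha_irr : irredundant adj alpha.

Lemma alpha_le_next (v w z : V) :
  adj v w -> adj w z -> v <> z -> alpha v w <= alpha w z.
Proof.
move=> vw wz vNz; rewrite -adj_sym in wz.
have [Y [/F_stars [_ [_ Ystar]] Yeq]] := alpha_F w.
have Yv : Y (alpha v w) by apply/Yeq; exists v.
have Yz : Y (alpha z w) by apply/Yeq; exists z.
by rewrite (alpha_flip wz); apply: Ystar (alpha_irr vw wz vNz).
Qed.

Lemma alpha_le_path (a z : V) (p : seq V) :
  path adj a (rcons p z) -> uniq (a :: rcons p z) ->
  alpha a (head z p) <= alpha (last a p) z.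
Proof.
elim/last_ind: p z => [|p w IH] z //.
rewrite rcons_path last_rcons => /andP [aw wz].
rewrite -rcons_cons rcons_uniq => /andP [zNaw aw_uniq].
have head_w : head z (rcons p w) = head w p by case: p {IH aw aw_uniq zNaw}.
rewrite head_w (le_trans (IH w aw aw_uniq)) //.
move: aw; rewrite rcons_path => /andP [_ lw]; apply: alpha_le_next lw wz _.
by move=> lz; rewrite -lz -rcons_cons mem_rcons inE mem_last orbT in zNaw.
Qed.

Hypothesis adj_irr : irreflexive adj.
Hypothesis adj_conn : forall a b, connect adj a b.
Variables x y : V.
Hypothesis x_leaf : forall z, adj x z -> z = y.

Lemma uniq_path_between (a b : V) :
  exists p, [/\ path adj a p, uniq (a :: p) & last a p = b].
Proof.
have /connectP [p ab_path ->] := adj_conn a b.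
by case: (shortenP ab_path) => q *; exists q.
Qed.

Lemma leaf_le_path (z : V) (p : seq V) :
  path adj x (rcons p z) -> uniq (x :: rcons p z) ->
  alpha x y <= alpha (last x p) z.
Proof.
move=> xz_path xz_uniq; have := alpha_le_path xz_path xz_uniq.
suff -> : head z p = y by [].
by apply: x_leaf; case: p {xz_uniq} xz_path => [|w p] /= /andP [].
Qed.

Lemma leaf_le_toward (t : V) : t <> x -> exists z, adj z t /\ alpha x y <= alpha z t.
Proof.
move=> tNx; have [p [xt_path xt_uniq xt_last]] := uniq_path_between x t.
case/lastP: p xt_path xt_uniq xt_last => [|p w]; first by move=> _ _ /esym.
rewrite last_rcons => xt_path xt_uniq <-; exists (last x p); split.
  by move: xt_path; rewrite rcons_path => /andP [].
exact: leaf_le_path.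
Qed.

Lemma leaf_le_edge (a b : V) :
  adj a b -> alpha x y <= alpha a b \/ alpha x y <= alpha b a.
Proof.
move=> ab; have [p [xa_path xa_uniq xa_last]] := uniq_path_between x a.
have [b_in | bNin] := boolP (b \in x :: p); last first.
  left; rewrite -xa_last; apply: leaf_le_path.
    by rewrite rcons_path xa_path xa_last.
  by rewrite -rcons_cons rcons_uniq bNin.
right; move: b_in; rewrite inE => /predU1P [bx | b_in].
  by rewrite bx (x_leaf (z := a)) // -bx adj_sym.
(* The prefix of the path ending at [b] avoids its endpoint [a]. *)
case/path.splitP: b_in xa_path xa_uniq xa_last => p1 p2.
rewrite cat_path -cat_cons cat_uniq last_cat last_rcons.
move=> /andP [xb_path _] /and3P [xb_uniq disj _] a_last.
rewrite -[b](last_rcons x p1 b); apply: leaf_le_path.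
  by rewrite rcons_path xb_path last_rcons adj_sym.
rewrite -rcons_cons rcons_uniq xb_uniq andbT.
case: p2 a_last disj => [/= ba | c p2 <-]; first by rewrite ba adj_irr in ab.
by apply: contra => a_in; apply/hasP; exists (last c p2); rewrite ?mem_last.
Qed.

Hypothesis starK : forall u, star (star u) = u.
Hypothesis S_star : closed_star star S.
Hypothesis alpha_S : forall a b, adj a b -> S (alpha a b).
Hypothesis xy : adj x y.
Hypothesis r_nontrivial : ~ trivial_in star S (alpha x y).
Hypothesis r_nondegenerate : ~ degenerate star (alpha x y).
Hypothesis r_unique :
  forall a b, adj a b -> (a, b) <> (x, y) -> alpha a b <> alpha x y.
Variable s0 : U.
Hypothesis Ss0 : S s0.
Hypothesis s0_linked : F_linked star S F (alpha x y) s0.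

Local Notation r := (alpha x y).
Local Notation alpha' := (fun a b => shift star r s0 (alpha a b)).

Lemma Sge_leaf_edge (a b : V) : adj a b -> Sge star S r (alpha a b).
Proof. by move=> ab; split; [apply: alpha_S | rewrite -alpha_flip //; apply: leaf_le_edge]. Qed.

Lemma alpha_neq_starr (z t : V) : adj z t -> t <> x -> alpha z t <> star r.
Proof.
move=> zt tNx zt_starr; apply: (r_unique (a := t) (b := z)).
- by rewrite adj_sym.
- by case.
- by rewrite (alpha_flip zt) zt_starr starK.
Qed.

Lemma above_toward (t : V) : t <> x -> exists z, adj z t /\ above star r (alpha z t).
Proof.
move=> tNx; have [z [zt rz]] := leaf_le_toward tNx.
by exists z; split; rewrite // /above rz; apply/eqP; apply: alpha_neq_starr.
Qed.

Lemma shift_assoc_leaf : set_eq (assoc adj alpha' x) (singleton (star s0)).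
Proof.
have starr_shift := shift_starr starK s0_linked.1.2.1.
move=> u; split => [[z [zx <-]] | ->].
  have xz : adj x z by rewrite adj_sym.
  by rewrite /= (x_leaf xz) (alpha_flip xy) starr_shift.
by exists y; split; [rewrite adj_sym | rewrite /= (alpha_flip xy) starr_shift].
Qed.

Lemma shift_edge (a b : V) :
  adj a b -> S (alpha' a b) /\ alpha' b a = star (alpha' a b).
Proof.
move=> ab; have Sab := Sge_leaf_edge ab; split.
  exact: shift_in_S starK r_nontrivial r_nondegenerate _ S_star s0_linked.1 Sab.
by rewrite /= (alpha_flip ab) (shift_star _ starK r_nontrivial r_nondegenerate Sab).
Qed.

Lemma shift_over_fam : over_fam (add_single F (star s0)) adj alpha'.
Proof.
move=> t; case: (eqVneq t x) => [-> | /eqP tNx].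
  by exists (singleton (star s0)); split; [right | move=> u; split => /shift_assoc_leaf].
have [Y [FY Yt]] := alpha_F t.
apply: inF_weaken (image_assoc _ Yt) (s0_linked.2 _ FY (F_stars FY) _ _).
- by move=> Z; left.
- by move=> u /Yt [z [zt <-]]; split; [apply: Sge_leaf_edge | apply: alpha_neq_starr].
- have [z [zt rz]] := leaf_le_toward tNx.
  by exists (alpha z t); split => //; apply/Yt; exists z.
Qed.

Lemma shift_assoc_other_leaf (l : V) :
  l <> x -> ~ set_eq (assoc adj alpha' l) (singleton (star s0)).
Proof.
move=> lNx /(_ (alpha' _ _)) l_assoc; have [z [zl ab]] := above_toward lNx.
apply: (shift_above_neq_star starK r_nontrivial r_nondegenerate Ss0 s0_linked.1.2.1 ab).
by apply/l_assoc; exists z.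
Qed.

End StarTree.

Theorem lemma4p3 (disp : Order.disp_t) (U : latticeType disp) (star : U -> U)
  (S : U -> Prop) (F : (U -> Prop) -> Prop)
  (V : finType) (adj : rel V) (alpha : V -> V -> U) (x y : V) (s0 : U) :
  is_involution star ->
  closed_star star S ->
  (forall sigma, F sigma -> is_star star S sigma) ->
  S_tree star S adj alpha ->
  over_fam F adj alpha ->
  irredundant adj alpha ->
  adj x y -> (forall z, adj x z -> z = y) ->
  ~ trivial_in star S (alpha x y) ->
  ~ degenerate star (alpha x y) ->
  (forall a b, adj a b -> (a, b) <> (x, y) -> alpha a b <> alpha x y) ->
  S s0 ->
  F_linked star S F (alpha x y) s0 ->
  let alpha' := fun a b => shift star (alpha x y) s0 (alpha a b) in
  (forall a b, adj a b -> Sge star S (alpha x y) (alpha a b)) /\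
  S_tree star S adj alpha' /\
  over_fam (add_single F (star s0)) adj alpha' /\
  set_eq (assoc adj alpha' x) (singleton (star s0)) /\
  (forall l, leaf adj l -> l <> x ->
     ~ set_eq (assoc adj alpha' l) (singleton (star s0))).
Proof.
move=> [starK _] S_star F_stars [tree [edge alpha_edge]] alpha_F alpha_irr xy x_leaf
  r_nontrivial r_nondegenerate r_unique Ss0 s0_linked alpha'.
have [adj_sym [adj_irr [adj_conn _]]] := tree.
have alpha_flip a b : adj a b -> alpha b a = star (alpha a b) by case/alpha_edge.
have alpha_S a b : adj a b -> S (alpha a b) by case/alpha_edge.
split; first by move=> a b; apply: Sge_leaf_edge; eassumption.
split; first by do 2!split=> //; apply: shift_edge; eassumption.
split; first by apply: shift_over_fam; eassumption.
split; first by apply: shift_assoc_leaf; eassumption.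
by move=> l _; apply: shift_assoc_other_leaf; eassumption.
Qed.
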